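(* Let $R$ be a supertropical semiring such that $eR$ is a semifield with $\mathcal G\neq\{e\}$, let $(q,b)$ be a quadratic pair on an $R$-module $V$, and let $x,y\in V\setminus\{0\}$. Suppose either that $(x,y)$ is weakly CS, or that $(x,y)$ is almost CS and both $q(x)$ and $q(y)$ lie in $eR$. Then $q(\lambda x+\mu y)=q(\lambda x)+q(\mu y)$ for all $\lambda,\mu\in R$ (equivalently, $q$ is additive on $Rx+Ry$).
   Context: All semirings are commutative with $1$. A semiring $R$ is supertropical if $e:=1+1$ satisfies $e+e=e$ and, for all $x,y\in R$: if $ex\neq ey$ then $x+y\in\{x,y\}$, and if $ex=ey$ then $x+y=ey$. $eR$ is totally ordered by $u\le v\iff u+v=v$; write $x\le_\nu y$, $x\cong_\nu y$, $x<_\nu y$ for $ex\le ey$, $ex=ey$, $ex<ey$. $\mathcal G=eR\setminus\{0\}$; ''$eR$ is a semifield'' means every element of $\mathcal G$ is invertible in the semiring $eR$ (whose unit is $e$). A quadratic form on an $R$-module $V$ is a map $q:V\to R$ with $q(ax)=a^2q(x)$ such that some symmetric bilinear $b$ satisfies $q(x+y)=q(x)+q(y)+b(x,y)$; $(q,b)$ is then a quadratic pair. A pair $(x,y)$ of nonzero vectors is weakly CS if $b(x,y)^2\le_\nu q(x)q(y)$, and almost CS if $b(x,y)^2\le_\nu c\,q(x)q(y)$ for every $c\in\mathcal G$ with $c>e$. *)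

From HB Require Import structures.
From mathcomp Require Import all_boot all_order all_algebra.
Set Implicit Arguments. Unset Strict Implicit. Unset Printing Implicit Defensive.
Import GRing.Theory.
Local Open Scope ring_scope.

Section Supertropical.
Variable R : comPzSemiRingType.

Definition ste : R := 1 + 1.

Definition supertropical : Prop :=
  ste + ste = ste /\
  forall x y : R,
    (ste * x <> ste * y -> x + y = x \/ x + y = y) /\
    (ste * x = ste * y -> x + y = ste * y).

Definition in_eR (a : R) : Prop := exists z : R, a = ste * z.

Definition eR_le (u v : R) : Prop := u + v = v.

Definition nu_le (x y : R) : Prop := eR_le (ste * x) (ste * y).

Definition in_G (a : R) : Prop := in_eR a /\ a <> 0.

Definition eR_semifield : Prop :=
  forall a, in_G a -> exists b, in_eR b /\ a * b = ste.

Definition G_ne_e : Prop := ~ (forall a, in_G a <-> a = ste).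

Variable V : lSemiModType R.

Definition quadratic_pair (q : V -> R) (b : V -> V -> R) : Prop :=
  (forall (a : R) (x : V), q (a *: x) = a ^+ 2 * q x) /\
  (forall x y, b x y = b y x) /\
  (forall x x' y, b (x + x') y = b x y + b x' y) /\
  (forall (a : R) x y, b (a *: x) y = a * b x y) /\
  (forall x y, q (x + y) = q x + q y + b x y).

Definition weakly_CS (q : V -> R) (b : V -> V -> R) (x y : V) : Prop :=
  x <> 0 /\ y <> 0 /\ nu_le (b x y ^+ 2) (q x * q y).

Definition almost_CS (q : V -> R) (b : V -> V -> R) (x y : V) : Prop :=
  x <> 0 /\ y <> 0 /\
  forall c : R, in_G c -> eR_le ste c -> c <> ste ->
    nu_le (b x y ^+ 2) (c * q x * q y).

End Supertropical.

From mathcomp Require Import all_boot all_order all_algebra.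
From mathcomp Require Import ring.
From Stdlib Require Import Classical.
Set Implicit Arguments.
Unset Printing Implicit Defensive.
Import GRing.Theory.
Local Open Scope ring_scope.

(* Writing A := q(λx), B := q(μy) and β := b(λx, μy), additivity means that
   A + B absorbs β, which in a supertropical semiring happens exactly when
   β <_ν A + B, or β ≅_ν A + B with A + B ∈ eR.  Since AB ≤_ν (A + B)^2, the
   weak CS inequality β^2 ≤_ν AB gives β ≤_ν A + B by cancellation in the
   semifield eR; in the tie case β^2 ≅_ν AB forces A ≅_ν B, so A + B = eB.
   Under the almost CS hypothesis A + B ∈ eR already, and β ≤_ν A + B follows
   by testing the hypothesis at c := eβ/(A + B), which would be > e otherwise. *)

Section Supertropical.
Variable R : comPzSemiRingType.
Hypothesis stR : supertropical R.
Local Notation e := (ste R).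
Implicit Types (a r x y z b A B M : R).

Lemma ste_idem : e * e = e.
Proof. by case: stR => ee _; rewrite {2}/ste mulrDr mulr1. Qed.

Lemma ste_mul_in_eR {a} : in_eR a -> e * a = a.
Proof. by case=> z ->; rewrite mulrA ste_idem. Qed.

Lemma in_eR_mull r a : in_eR a -> in_eR (r * a).
Proof. by case=> z ->; exists (r * z); rewrite mulrCA. Qed.

Lemma addr_nu_eq {x y} : e * x = e * y -> x + y = e * y.
Proof. by case: stR => _ /(_ x y) [_]. Qed.

Lemma addr_nu_neq {x y} : e * x != e * y -> x + y = x \/ x + y = y.
Proof. by case: stR => _ /(_ x y) [+ _] /eqP. Qed.

Lemma nu_le_eq {x y} : e * x = e * y -> nu_le x y.
Proof. by case: stR => ee _ exy; rewrite /nu_le /eR_le exy -mulrDl ee. Qed.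

Lemma nu_le_ste0 x y : e * x = 0 -> nu_le x y.
Proof. by rewrite /nu_le /eR_le => ->; rewrite add0r. Qed.

Lemma nu_le_total x y : nu_le x y \/ nu_le y x.
Proof.
have [exy|/addr_nu_neq[]/(congr1 ( *%R e))] := eqVneq (e * x) (e * y).
- by left; apply: nu_le_eq.
- by rewrite mulrDr addrC; right.
- by rewrite mulrDr; left.
Qed.

Lemma nu_le_antisym {x y} : nu_le x y -> nu_le y x -> e * x = e * y.
Proof. by rewrite /nu_le /eR_le => hxy <-; rewrite addrC. Qed.

Lemma nu_le_trans {y x z} : nu_le x y -> nu_le y z -> nu_le x z.
Proof. by rewrite /nu_le /eR_le => hxy <-; rewrite addrA hxy. Qed.

Lemma nu_le_mul2r z {x y} : nu_le x y -> nu_le (x * z) (y * z).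
Proof. by rewrite /nu_le /eR_le !mulrA -mulrDl => ->. Qed.

Lemma nu_le_mul2l z {x y} : nu_le x y -> nu_le (z * x) (z * y).
Proof. by rewrite ![z * _]mulrC; apply: nu_le_mul2r. Qed.

Lemma nu_le_addr x y : nu_le x (x + y).
Proof. by case: stR => ee _; rewrite /nu_le /eR_le mulrDr addrA -mulrDl ee. Qed.

Lemma nu_le_mul_sqr_add A B : nu_le (A * B) ((A + B) ^+ 2).
Proof.
rewrite expr2; apply: (nu_le_trans (nu_le_mul2r B (nu_le_addr A B))).
by apply: nu_le_mul2l; rewrite addrC; apply: nu_le_addr.
Qed.

Lemma addr_nu_lt {x y} : nu_le x y -> e * x != e * y -> x + y = y.
Proof.
move=> hxy nxy; case: (addr_nu_neq nxy) => // hx.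
move/eqP: nxy; case; apply: nu_le_antisym hxy _.
by rewrite -hx addrC; apply: nu_le_addr.
Qed.

Lemma addr_nu_absorb b M : nu_le b M -> (e * b = e * M -> e * M = M) -> M + b = M.
Proof.
move=> hbM tie; rewrite addrC.
have [ebM|nbM] := eqVneq (e * b) (e * M); last exact: addr_nu_lt.
by rewrite addr_nu_eq // tie.
Qed.

Hypothesis sfR : eR_semifield R.

Lemma nu_mulr_cancel {x y z} : e * (x * z) = e * (y * z) -> e * z != 0 -> e * x = e * y.
Proof.
move=> hxyz nz; have [w [_ hw]] : exists w, in_eR w /\ e * z * w = e.
  by apply: sfR; split; [exists z | exact/eqP].
have ste_mulK t : e * t = e * t * (e * z * w) by rewrite hw mulrAC ste_idem.
rewrite (ste_mulK x) (ste_mulK y).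
by transitivity (e * (x * z) * (e * w)); [ring | rewrite hxyz; ring].
Qed.

Lemma nu_le_mul2r_cancel z {x y} : nu_le (x * z) (y * z) -> e * z != 0 -> nu_le x y.
Proof.
move=> hxy nz; case: (nu_le_total x y) => // hyx.
by apply/nu_le_eq/(nu_mulr_cancel^~ nz)/(nu_le_antisym hxy)/nu_le_mul2r.
Qed.

Lemma ste_sqr_eq0 x : e * x ^+ 2 = 0 -> e * x = 0.
Proof.
move=> hx; have [//|nz] := eqVneq (e * x) 0.
by rewrite -(mulr0 e); apply: nu_mulr_cancel nz; rewrite mul0r mulr0 -expr2.
Qed.

Lemma nu_le_sqr b M : nu_le (b ^+ 2) (M ^+ 2) -> nu_le b M.
Proof.
move=> hbM; have [eb0|nz] := eqVneq (e * b) 0; first exact: nu_le_ste0.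
case: (nu_le_total b M) => // hMb; apply: (nu_le_mul2r_cancel b) nz.
by rewrite -expr2; apply: (nu_le_trans hbM); rewrite expr2; apply: nu_le_mul2l.
Qed.

Lemma nu_sqr_le_mul_eq {b A B} :
  nu_le (b ^+ 2) (A * B) -> e * b = e * (A + B) -> e * A = e * B.
Proof.
wlog hAB : A B / nu_le A B.
  move=> wlog hb ebAB; case: (nu_le_total A B) => hle; first exact: wlog.
  by symmetry; apply: (wlog _ _ hle); [rewrite mulrC | rewrite addrC].
move=> hb ebAB; have [//|nAB] := eqVneq (e * A) (e * B).
have nzB : e * B != 0.
  apply: contraNneq nAB => eB0; rewrite eB0.
  by move: hAB; rewrite /nu_le /eR_le eB0 addr0 => ->.
rewrite (addr_nu_lt hAB nAB) in ebAB.
apply: nu_mulr_cancel nzB; apply: nu_le_antisym (nu_le_mul2r B hAB) _.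
apply: nu_le_trans hb; apply: nu_le_eq.
by rewrite expr2 !mulrA ebAB [in RHS]mulrAC ebAB.
Qed.

Lemma exists_G_gt_ste : e != 0 -> G_ne_e R -> exists c, in_G c /\ eR_le e c /\ c <> e.
Proof.
move=> /eqP e0 hG; have [a [aG ae]] : exists a, in_G a /\ a <> e.
  apply: NNPP => none; apply: hG => a; split=> [aG|->].
    by apply: NNPP => ae; apply: none; exists a.
  by split=> //; exists 1; rewrite mulr1.
have ea := ste_mul_in_eR aG.1.
case: (nu_le_total e a); rewrite /nu_le ste_idem ea => hea; first by exists a.
have [w [wR hw]] := sfR aG; have ew := ste_mul_in_eR wR.
exists w; split; [split=> // w0 | split].
- by apply: e0; rewrite -hw w0 mulr0.
- by move: hea => /(congr1 ( *%R^~ w)); rewrite mulrDl hw ew.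
- by move=> we; apply: ae; rewrite -hw we mulrC ea.
Qed.

Lemma nu_le_of_sqr_le_G_gt_ste b M : G_ne_e R ->
  (forall c, in_G c -> eR_le e c -> c <> e -> nu_le (b ^+ 2) (c * M ^+ 2)) ->
  nu_le b M.
Proof.
move=> hG hc; have [eb0|nzb] := eqVneq (e * b) 0; first exact: nu_le_ste0.
case: (nu_le_total b M) => // hMb.
have [eM0|nzM] := eqVneq (e * M) 0.
  have e0 : e != 0 by apply: contraNneq nzb => ->; rewrite mul0r.
  have [c [cG [ce cne]]] := exists_G_gt_ste e0 hG.
  have ecMM : e * (c * M ^+ 2) = 0.
    by transitivity (c * (e * M) * M); [ring | rewrite eM0 mulr0 mul0r].
  move: (hc c cG ce cne); rewrite /nu_le /eR_le ecMM addr0 => /ste_sqr_eq0 eb0.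
  by rewrite eb0 eqxx in nzb.
have [w [_ hw]] : exists w, in_eR w /\ e * M * w = e.
  by apply: sfR; split; [exists M | exact/eqP].
(* c = eβ/(eM) *)
pose c := e * b * w.
have cM : c * (e * M) = e * b.
  by transitivity (e * b * (e * M * w)); [rewrite /c; ring | rewrite hw mulrAC ste_idem].
have [ce|/eqP cne] := eqVneq c e.
  by apply: nu_le_eq; rewrite -cM ce mulrA ste_idem.
have cG : in_G c.
  split; first by exists (b * w); rewrite /c mulrA.
  by move=> c0; rewrite -cM c0 mul0r eqxx in nzb.
have ce : eR_le e c.
  by move: hMb => /(congr1 ( *%R^~ w)); rewrite mulrDl hw.
have ecMM : e * (c * M ^+ 2) = e * (M * b).
  transitivity (e * M * w * (e * (M * b))); first by rewrite /c; ring.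
  by rewrite hw mulrA ste_idem.
apply: (nu_le_mul2r_cancel b) nzb; rewrite -expr2.
exact: nu_le_trans (hc c cG ce cne) (nu_le_eq ecMM).
Qed.

Lemma addr_absorb_weakly_CS A B b : nu_le (b ^+ 2) (A * B) -> A + B + b = A + B.
Proof.
move=> hb; apply: addr_nu_absorb.
  exact/nu_le_sqr/(nu_le_trans hb)/nu_le_mul_sqr_add.
by move=> /(nu_sqr_le_mul_eq hb) eAB; rewrite (addr_nu_eq eAB) mulrA ste_idem.
Qed.

Lemma addr_absorb_almost_CS A B b : G_ne_e R -> in_eR A -> in_eR B ->
  (forall c, in_G c -> eR_le e c -> c <> e -> nu_le (b ^+ 2) (c * A * B)) ->
  A + B + b = A + B.
Proof.
move=> hG /ste_mul_in_eR eA /ste_mul_in_eR eB hc.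
apply: addr_nu_absorb => [|_]; last by rewrite mulrDr eA eB.
apply: nu_le_of_sqr_le_G_gt_ste hG _ => c cG ce cne.
apply: nu_le_trans (hc c cG ce cne) _; rewrite -mulrA.
exact/nu_le_mul2l/nu_le_mul_sqr_add.
Qed.

End Supertropical.

Section QuadraticPair.
Variables (R : comPzSemiRingType) (V : lSemiModType R).
Variables (q : V -> R) (b : V -> V -> R).
Hypothesis qb : quadratic_pair q b.

Lemma quadratic_pairZ a x : q (a *: x) = a ^+ 2 * q x.
Proof. by case: qb. Qed.

Lemma quadratic_pairD x y : q (x + y) = q x + q y + b x y.
Proof. by case: qb => _ [_ [_ [_ ->]]]. Qed.

Lemma quadratic_pair_bilinZ la mu x y : b (la *: x) (mu *: y) = la * mu * b x y.
Proof. by case: qb => _ [bC [_ [bZ _]]]; rewrite bZ bC bZ bC mulrA. Qed.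

Lemma in_eR_quadratic_pairZ a x : in_eR (q x) -> in_eR (q (a *: x)).
Proof. by rewrite quadratic_pairZ; apply: in_eR_mull. Qed.

Lemma nu_le_quadratic_pairZ c la mu x y :
  nu_le (b x y ^+ 2) (c * q x * q y) ->
  nu_le (b (la *: x) (mu *: y) ^+ 2) (c * q (la *: x) * q (mu *: y)).
Proof.
move=> /(nu_le_mul2r (la ^+ 2 * mu ^+ 2)).
rewrite quadratic_pair_bilinZ !quadratic_pairZ.
by congr nu_le; ring.
Qed.

End QuadraticPair.

Theorem theorem1p12 (R : comPzSemiRingType) (V : lSemiModType R)
    (q : V -> R) (b : V -> V -> R) (x y : V) :
  supertropical R -> eR_semifield R -> G_ne_e R ->
  quadratic_pair q b ->
  x <> 0 -> y <> 0 ->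
  (weakly_CS q b x y \/ (almost_CS q b x y /\ in_eR (q x) /\ in_eR (q y))) ->
  forall lambda mu : R,
    q (lambda *: x + mu *: y) = q (lambda *: x) + q (mu *: y).
Proof.
move=> stR sfR hG qb _ _ hCS la mu; rewrite (quadratic_pairD qb).
case: hCS => [[_ [_ hCS]] | [[_ [_ hCS]] [hx hy]]].
- apply: addr_absorb_weakly_CS => //; rewrite -[q (la *: x)]mul1r.
  by apply: nu_le_quadratic_pairZ => //; rewrite mul1r.
- apply: (addr_absorb_almost_CS stR sfR _ hG).
  + exact: in_eR_quadratic_pairZ qb la x hx.
  + exact: in_eR_quadratic_pairZ qb mu y hy.
  + by move=> c cG ce cne; apply/nu_le_quadratic_pairZ/hCS.
Qed.
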